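(* Let $G_1=(V,D_1)$ and $G_2=(V,D_2)$ be distinct simple directed graphs on the same node set $V$. Suppose they have the same out-degree sequence, meaning $|\mathrm{ch}_1(v)|=|\mathrm{ch}_2(v)|$ for every $v\in V$, and that at least one of them is acyclic. Then $G_1$ and $G_2$ have different Jacobian matroids.
   Context: A directed graph $G=(V,D)$ has edge set $D\subseteq V\times V$ of ordered pairs $(i,j)$, $i\neq j$. It is simple if $(i,j)$ and $(j,i)$ are never both in $D$. $\mathrm{ch}_k(v)$ is the set of children of $v$ in $G_k$. For $G=(V,D)$ let $\Lambda$ be the $V\times V$ matrix with indeterminate entries $\lambda_{ij}$ for $(i,j)\in D$ and zeros elsewhere, and $s$ a further indeterminate. Let $\psi_G(\Lambda,s)=s(I-\Lambda)(I-\Lambda)^T=K$. The transposed Jacobian $J(\psi_G)$ has rows indexed by $\{\lambda_{kl}:(k,l)\in D\}\cup\{s\}$ and columns indexed by $K_{ij}$, $i\le j$, with entries $\partial K_{ij}/\partial\theta$. The Jacobian matroid of $G$ is the matroid on the columns in which a set is independent iff its columns are linearly independent over $\mathbb{R}(\lambda,s)$. *)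

From HB Require Import structures.
From mathcomp Require Import all_boot all_order all_algebra fraction.
From mathcomp Require Import reals.
From mathcomp Require Import mpoly.

Set Implicit Arguments.
Unset Strict Implicit.
Unset Printing Implicit Defensive.

Import Order.TTheory GRing.Theory Num.Theory.
Local Open Scope ring_scope.

Definition no_loops n (D : {set 'I_n * 'I_n}) : Prop :=
  forall i : 'I_n, (i, i) \notin D.

Definition simple_digraph n (D : {set 'I_n * 'I_n}) : Prop :=
  no_loops D /\ forall i j : 'I_n, (i, j) \in D -> (j, i) \notin D.

Definition ch n (D : {set 'I_n * 'I_n}) (v : 'I_n) : {set 'I_n} :=
  [set j | (v, j) \in D].

Definition acyclic n (D : {set 'I_n * 'I_n}) : Prop :=
  ~ exists (x : 'I_n) (p : seq 'I_n),
      [/\ p != [::], path (fun u v => (u, v) \in D) x p & last x p = x].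

(* Indeterminates: s is variable 0, lambda_(i,j) is variable 1 + rank of (i,j).
   (Variables lambda_(i,j) with (i,j) \notin D are simply unused.) *)
Definition nvars n := #|{: 'I_n * 'I_n}|.+1.

Definition s_var n : 'I_(nvars n) := ord0.
Definition lam_var n (e : 'I_n * 'I_n) : 'I_(nvars n) := lift ord0 (enum_rank e).

Section Jacobian.
Variable R : realType.
Variable n : nat.
Local Notation P := {mpoly R[nvars n]}.
Local Notation F := {fraction P}.

Definition Lambda (D : {set 'I_n * 'I_n}) : 'M[P]_n :=
  \matrix_(i, j) (if (i, j) \in D then 'X_(lam_var (i, j)) else 0).

Definition psiK (D : {set 'I_n * 'I_n}) : 'M[P]_n :=
  'X_(s_var n) *: ((1%:M - Lambda D) *m (1%:M - Lambda D)^T).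

(* row index theta of the transposed Jacobian: s or lambda_kl with (k,l) in D *)
Definition is_param (D : {set 'I_n * 'I_n}) (theta : 'I_(nvars n)) : bool :=
  (theta == s_var n) || [exists e in D, theta == lam_var e].

Definition ground : {set 'I_n * 'I_n} := [set c : 'I_n * 'I_n | (nat_of_ord c.1 <= nat_of_ord c.2)%N].

(* entry (theta, K_ij) of J(psi_G), viewed in R(lambda, s) *)
Definition jac (D : {set 'I_n * 'I_n}) (theta : 'I_(nvars n)) (c : 'I_n * 'I_n) : F :=
  FracField.tofrac (mderiv theta (psiK D c.1 c.2)).

Definition jac_indep (D : {set 'I_n * 'I_n}) (S : {set 'I_n * 'I_n}) : Prop :=
  S \subset ground /\
  forall a : 'I_n * 'I_n -> F,
    (forall theta, is_param D theta -> \sum_(c in S) a c * jac D theta c = 0) ->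
    forall c, c \in S -> a c = 0.

Definition jacobian_matroid (D : {set 'I_n * 'I_n}) : {set 'I_n * 'I_n} -> Prop :=
  jac_indep D.

End Jacobian.

(* Let D1 be acyclic.  Pick a node w whose parent set differs in D1 and D2 but
   such that no D1-descendant of w has this property, and let B be the set of these
   descendants.  Then both graphs have the same edges into B, and since out-degrees agree,
   the same edges out of w and out of B; they also share a sink z.  Some i is a parent of w
   in exactly one of the graphs.  In the graph containing i -> w, the columns K_iw, K_zz and
   K_pq for the edges p -> q into B form a triangular system with pivots lambda_iw, s and
   lambda_pq (ordered by the number of descendants of q), hence are independent.  In the
   other graph, the columns K_zz and K_pq span the coordinate vectors of s and of every
   lambda_pq with q in B, and K_iw lies in their span. *)

From mathcomp Require Import all_boot all_algebra fraction.
From mathcomp Require Import reals.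
From mathcomp Require Import mpoly.
From mathcomp Require Import ring.

Set Implicit Arguments.
Unset Strict Implicit.
Unset Printing Implicit Defensive.

Import GRing.Theory.
Local Open Scope ring_scope.

Lemma fin_down_ind (T : finType) (rk : T -> nat) (P : T -> Prop) :
  (forall x, (forall y, (rk x < rk y)%N -> P y) -> P x) -> forall x, P x.
Proof.
move=> IH x; have [k] := ubnP (\max_y rk y - rk x).
elim: k x => // k IHk x lt_k; apply: IH => y lt_xy; apply: IHk.
move: lt_k; rewrite ltnS; apply: leq_trans.
by rewrite ltn_sub2l // (leq_trans lt_xy) ?leq_bigmax.
Qed.

Lemma pivot_coef_eq0 (F : idomainType) (C : finType) (S : {set C}) (a m : C -> F) c0 :
  c0 \in S -> m c0 != 0 -> (forall c, c \in S -> c != c0 -> a c * m c = 0) ->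
  \sum_(c in S) a c * m c = 0 -> a c0 = 0.
Proof.
move=> Sc0 mc0 others; rewrite (bigD1 c0) //= big1 ?addr0.
  by move/eqP; rewrite mulf_eq0 (negbTE mc0) orbF => /eqP.
by move=> c /andP[]; apply: others.
Qed.

Section Descendants.
Variables (n : nat) (D : {set 'I_n * 'I_n}).

Definition desc (w : 'I_n) : {set 'I_n} :=
  [set b | [exists c, ((w, c) \in D) && connect (fun u v => (u, v) \in D) c b]].

Lemma mem_desc_child q m : (q, m) \in D -> m \in desc q.
Proof. by move=> qm; rewrite inE; apply/existsP; exists m; rewrite qm connect0. Qed.

Lemma desc_trans w b b' : b \in desc w -> b' \in desc b -> b' \in desc w.
Proof.
rewrite !inE => /existsP[c /andP[wc cb]] /existsP[c' /andP[bc' c'b']].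
apply/existsP; exists c; rewrite wc /=.
by apply: connect_trans cb _; apply: connect_trans c'b'; apply: connect1.
Qed.

Hypothesis acyclicD : acyclic D.

Lemma desc_irr w : w \notin desc w.
Proof.
rewrite inE; apply/existsP => -[c /andP[wc /connectP[p pth lst]]].
by apply: acyclicD; exists w, (c :: p); split => //=; rewrite wc pth.
Qed.

Lemma card_desc_lt w b : b \in desc w -> (#|desc b| < #|desc w|)%N.
Proof.
move=> bw; apply: proper_card; rewrite properE; apply/andP; split.
  by apply/subsetP => b'; apply: desc_trans.
by apply/subsetPn; exists b => //; apply: desc_irr.
Qed.

Lemma acyclic_minimal (P : pred 'I_n) v :
  P v -> exists2 w, P w & forall b, b \in desc w -> ~~ P b.
Proof.
move=> Pv; have [k] := ubnP #|desc v|; elim: k v Pv => // k IH v Pv lt_v.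
have [/exists_inP[b bv Pb]|/exists_inPn none] := boolP [exists b in desc v, P b].
  by apply: IH Pb _; apply: leq_trans (card_desc_lt bv) _.
by exists v.
Qed.

Lemma acyclic_sink (v : 'I_n) : exists z, forall k, (z, k) \notin D.
Proof.
have [z _ none] := @acyclic_minimal predT v isT.
by exists z => k; apply/negP => /mem_desc_child/none.
Qed.

End Descendants.

Lemma mderivXU (R : nzRingType) k (i j : 'I_k) :
  mderiv i ('X_j : {mpoly R[k]}) = (i == j)%:R.
Proof.
rewrite mderivX mnm1E eq_sym; case: eqP => [->|_]; last by rewrite scale0r.
by rewrite scale1r -[X in (X - _)%MM]add0m addmK mpolyX0.
Qed.

Definition upair n (p q : 'I_n) : 'I_n * 'I_n := if (p <= q)%N then (p, q) else (q, p).

Lemma upair_ground n (p q : 'I_n) : upair p q \in ground n.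
Proof. by rewrite /upair inE; case: (leqP p q) => [|/ltnW]. Qed.

Lemma upair_eq n (p q a b : 'I_n) : upair p q = upair a b ->
  (p == a) && (q == b) || (p == b) && (q == a).
Proof. by rewrite /upair; do 2 case: ifP => _; case=> -> ->; rewrite !eqxx ?orbT. Qed.

Section EdgeColumnSet.
Variables (n : nat) (D : {set 'I_n * 'I_n}) (B : {set 'I_n}) (z : 'I_n).

Definition edge_cols : {set 'I_n * 'I_n} :=
  (z, z) |: [set upair e.1 e.2 | e in [set e in D | e.2 \in B]].

Lemma edge_cols_cases c : c \in edge_cols ->
  c = (z, z) \/ exists p q, [/\ (p, q) \in D, q \in B & c = upair p q].
Proof.
case/setU1P => [->|/imsetP[[p q]]]; first by left.
by rewrite inE => /andP[pqD qB] ->; right; exists p, q.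
Qed.

Lemma mem_edge_cols_sink : (z, z) \in edge_cols.
Proof. exact: setU11. Qed.

Lemma mem_edge_cols p q : (p, q) \in D -> q \in B -> upair p q \in edge_cols.
Proof. by move=> pqD qB; apply/setU1r/imsetP; exists (p, q); rewrite ?inE ?pqD. Qed.

Lemma edge_cols_ground : edge_cols \subset ground n.
Proof.
apply/subsetP => c /edge_cols_cases[->|[p [q [_ _ ->]]]]; last exact: upair_ground.
by rewrite inE /=.
Qed.

Lemma upair_notin_edge_cols i w :
  i \notin B -> w \notin B -> i != w -> upair i w \notin edge_cols.
Proof.
move=> iB wB iw; apply/negP => /edge_cols_cases[|[p [q [_ qB /esym/upair_eq]]]].
  by rewrite /upair; case: ifP => _ [ei ew]; move: iw; rewrite ei ew eqxx.
by case/orP => /andP[_ /eqP qe]; [move: wB | move: iB]; rewrite -qe qB.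
Qed.

End EdgeColumnSet.

Section JacobianEntries.
Variables (R : realType) (n : nat).
Local Notation P := {mpoly R[nvars n]}.
Local Notation F := {fraction P}.
Implicit Types (D : {set 'I_n * 'I_n}) (p q a b k : 'I_n).

Lemma lam_var_inj : injective (@lam_var n).
Proof. by move=> e e' /lift_inj /enum_rank_inj. Qed.

Lemma lam_var_neq_s e : (lam_var e == s_var n) = false.
Proof. by apply/negbTE; rewrite eq_sym; apply: neq_lift. Qed.

Lemma is_param_cases D th :
  is_param D th -> th = s_var n \/ exists2 e, e \in D & th = lam_var e.
Proof. by case/orP => [/eqP|/exists_inP[e eD /eqP]]; [left|right; exists e]. Qed.

Lemma is_param_s D : is_param D (s_var n).
Proof. by rewrite /is_param eqxx. Qed.

Lemma is_param_lam D e : e \in D -> is_param D (lam_var e).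
Proof. by move=> eD; apply/orP; right; apply/exists_inP; exists e. Qed.

Definition s_frac : F := tofrac 'X_(s_var n).

Lemma s_frac_neq0 : s_frac != 0.
Proof.
rewrite tofrac_eq0; apply: contraTneq isT => s0.
have := mcoeffXU R (s_var n) (s_var n).
by rewrite s0 mcoeff0 eqxx => /esym/eqP; rewrite oner_eq0.
Qed.

Definition ImL D : 'M[P]_n := 1%:M - Lambda R D.

Lemma ImLE D p k :
  ImL D p k = (p == k)%:R - (if (p, k) \in D then 'X_(lam_var (p, k)) else 0).
Proof. by rewrite !mxE. Qed.

Lemma ImL_diag D p : no_loops D -> ImL D p p = 1.
Proof. by move=> nl; rewrite ImLE (negbTE (nl p)) eqxx subr0. Qed.

Lemma ImL_eq0 D p k : p != k -> (p, k) \notin D -> ImL D p k = 0.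
Proof. by move=> /negbTE pk /negbTE pkD; rewrite ImLE pk pkD subr0. Qed.

Lemma mderiv_ImL D a b p k :
  mderiv (lam_var (a, b)) (ImL D p k) = - (((p, k) == (a, b)) && ((a, b) \in D))%:R.
Proof.
rewrite ImLE mderivB -mpolyC_nat mderivC sub0r; congr (- _).
case: ifP => pkD; last by rewrite mderiv0; case: (_ =P _) => // <-; rewrite pkD.
by rewrite mderivXU (inj_eq lam_var_inj) eq_sym; case: (_ =P _) => // <-; rewrite pkD.
Qed.

Lemma psiKE D p q : psiK R D p q = 'X_(s_var n) * \sum_k ImL D p k * ImL D q k.
Proof. by rewrite !mxE; congr (_ * _); apply: eq_bigr => k _; rewrite !mxE. Qed.

Lemma jac_sym D th p q : jac R D th (q, p) = jac R D th (p, q).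
Proof.
rewrite /jac /= !psiKE; congr (tofrac (mderiv _ (_ * _))).
by apply: eq_bigr => k _; rewrite mulrC.
Qed.

Lemma jac_upair D th p q : jac R D th (upair p q) = jac R D th (p, q).
Proof. by rewrite /upair; case: ifP => // _; rewrite jac_sym. Qed.

Lemma jac_sink D th z : no_loops D -> (forall k, (z, k) \notin D) ->
  jac R D th (z, z) = (th == s_var n)%:R.
Proof.
move=> nl sink; rewrite /jac /= psiKE (bigD1 z) //= ImL_diag // mulr1 big1 ?addr0.
  by rewrite mulr1 mderivXU rmorph_nat.
by move=> k kz; rewrite ImL_eq0 ?mul0r // eq_sym.
Qed.

Lemma jac_lamE D a b p q :
  jac R D (lam_var (a, b)) (p, q) =
  - s_frac * ((a, b) \in D)%:R *
    ((p == a)%:R * tofrac (ImL D q b) + (q == a)%:R * tofrac (ImL D p b)).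
Proof.
have sum_delta c1 c2 (f : 'I_n -> P) :
    \sum_k ((c1 && (k == b)) && c2)%:R * f k = (c1%:R * c2%:R) * f b.
  rewrite (bigD1 b) //= eqxx andbT -natrM mulnb big1 ?addr0 // => k /negbTE ->.
  by rewrite andbF mul0r.
rewrite /jac /= psiKE mderivM mderivXU lam_var_neq_s mul0r add0r raddf_sum /=.
under eq_bigr => k _ do rewrite mderivM !mderiv_ImL !xpair_eqE mulNr mulrN.
rewrite big_split /= !sumrN sum_delta.
under [X in _ - X]eq_bigr => k _ do rewrite mulrC.
rewrite sum_delta !rmorphM /= rmorphB rmorphN !rmorphM /= !rmorph_nat.
rewrite -/s_frac; ring.
Qed.

Lemma jac_lam_neq0 D a b p q : jac R D (lam_var (a, b)) (p, q) != 0 ->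
  ((a, b) \in D) &&
  ((p == a) && ((q == b) || ((q, b) \in D)) || (q == a) && ((p == b) || ((p, b) \in D))).
Proof.
have ImL0 x : ~~ ((x == b) || ((x, b) \in D)) -> tofrac (ImL D x b) = 0.
  by rewrite negb_or => /andP[xb xbD]; rewrite ImL_eq0 ?rmorph0.
rewrite jac_lamE => nz; apply/andP; split.
  by apply: contraTT nz => /negbTE ->; rewrite mulr0 mul0r eqxx.
apply: contraTT nz => /norP[/nandP hp /nandP hq]; rewrite negbK.
suff -> : (p == a)%:R * tofrac (ImL D q b) + (q == a)%:R * tofrac (ImL D p b) = 0.
  by rewrite mulr0.
by case: hp => [/negbTE ->|/ImL0 ->]; case: hq => [/negbTE ->|/ImL0 ->];
  rewrite ?(mul0r, mulr0, addr0).
Qed.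

Lemma jac_lam_edge D p q : simple_digraph D -> (p, q) \in D ->
  jac R D (lam_var (p, q)) (p, q) = - s_frac.
Proof.
move=> [nl _] pqD; have /negbTE qp : q != p by apply: contraTneq pqD => ->; apply: nl.
by rewrite jac_lamE pqD eqxx qp ImL_diag // tofrac1 /=; ring.
Qed.

Definition in_span D (S : {set 'I_n * 'I_n}) (v : 'I_(nvars n) -> F) : Prop :=
  exists x : 'I_n * 'I_n -> F,
    forall th, is_param D th -> v th = \sum_(c in S) x c * jac R D th c.

Definition delta (th0 th : 'I_(nvars n)) : F := (th == th0)%:R.

Section Span.
Variables (D : {set 'I_n * 'I_n}) (S : {set 'I_n * 'I_n}).
Implicit Types (u v : 'I_(nvars n) -> F).

Lemma in_span_eq u v :
  (forall th, is_param D th -> u th = v th) -> in_span D S u -> in_span D S v.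
Proof. by move=> uv [x ux]; exists x => th th_par; rewrite -uv ?ux. Qed.

Lemma in_span_col c : c \in S -> in_span D S (fun th => jac R D th c).
Proof.
move=> Sc; exists (fun c' => (c' == c)%:R) => th _.
rewrite (bigD1 c) //= eqxx mul1r big1 ?addr0 // => c' /andP[_ /negbTE ->].
by rewrite mul0r.
Qed.

Lemma in_spanD u v :
  in_span D S u -> in_span D S v -> in_span D S (fun th => u th + v th).
Proof.
move=> [x ux] [y vy]; exists (fun c => x c + y c) => th th_par.
by rewrite ux ?vy // -big_split; apply: eq_bigr => c _; rewrite mulrDl.
Qed.

Lemma in_spanZ y v : in_span D S v -> in_span D S (fun th => y * v th).
Proof.
move=> [x vx]; exists (fun c => y * x c) => th th_par.
by rewrite vx // mulr_sumr; apply: eq_bigr => c _; rewrite mulrA.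
Qed.

Lemma in_span_sum (I : finType) (P : pred I) (y : I -> F) (f : I -> 'I_(nvars n) -> F) :
  (forall i, P i -> in_span D S (f i)) ->
  in_span D S (fun th => \sum_(i | P i) y i * f i th).
Proof.
move=> span_f.
have /fin_all_exists[x fx] : forall i, exists x : 'I_n * 'I_n -> F, P i ->
    forall th, is_param D th -> f i th = \sum_(c in S) x c * jac R D th c.
  move=> i; have [Pi|_] := boolP (P i); last by exists (fun _ => 0).
  by have [x fx] := span_f i Pi; exists x.
exists (fun c => \sum_(i | P i) y i * x i c) => th th_par.
under eq_bigr => i Pi do rewrite fx // mulr_sumr.
rewrite exchange_big; apply: eq_bigr => c _; rewrite mulr_suml.
by apply: eq_bigr => i _; rewrite mulrA.
Qed.

Lemma in_span_support v :
  in_span D S (delta (s_var n)) ->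
  (forall e, e \in D -> v (lam_var e) != 0 -> in_span D S (delta (lam_var e))) ->
  in_span D S v.
Proof.
move=> span_s span_lam.
apply: (@in_span_eq (fun th => v (s_var n) * delta (s_var n) th +
   \sum_(e | (e \in D) && (v (lam_var e) != 0)) v (lam_var e) * delta (lam_var e) th)).
  move=> th /is_param_cases[->|[e0 e0D ->]].
    rewrite /delta eqxx mulr1 big1 ?addr0 // => e _.
    by rewrite eq_sym lam_var_neq_s mulr0.
  rewrite /delta lam_var_neq_s mulr0 add0r.
  have [v0|nz] := eqVneq (v (lam_var e0)) 0.
    rewrite v0 big1 // => e /andP[_ nz_e]; rewrite (inj_eq lam_var_inj).
    by case: (e0 =P e) nz_e => [<- _|_ _]; rewrite ?v0 ?mul0r ?mulr0.
  rewrite (bigD1 e0) /=; last by rewrite e0D nz.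
  rewrite eqxx mulr1 big1 ?addr0 // => e /andP[_ ne].
  by rewrite (inj_eq lam_var_inj) eq_sym (negbTE ne) mulr0.
apply: in_spanD; first exact: in_spanZ.
by apply: in_span_sum => e /andP[eD nz]; apply: span_lam.
Qed.

Lemma in_span_dependent c0 :
  c0 \notin S -> in_span D S (fun th => jac R D th c0) -> ~ jac_indep R D (c0 |: S).
Proof.
move=> S_c0 [x c0x] [_ indep].
pose y c := if c == c0 then -1 else x c.
have rel th : is_param D th -> \sum_(c in c0 |: S) y c * jac R D th c = 0.
  move=> th_par; rewrite big_setU1 //= /y eqxx mulN1r c0x //.
  rewrite [X in _ + X](eq_bigr (fun c => x c * jac R D th c)) ?addNr // => c Sc.
  by case: eqP => // c_c0; move: S_c0; rewrite -c_c0 Sc.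
have := indep y rel c0 (setU11 _ _); rewrite /y eqxx => /eqP.
by rewrite oppr_eq0 oner_eq0.
Qed.

End Span.

End JacobianEntries.

Arguments in_span R {n} D S v.

Section EdgeColumns.
Variables (R : realType) (n : nat) (D : {set 'I_n * 'I_n}) (B : {set 'I_n}) (z : 'I_n).
Variable rk : 'I_n -> nat.
Hypothesis simpleD : simple_digraph D.
Hypothesis sink_z : forall k, (z, k) \notin D.
Hypothesis B_closed : forall q m, q \in B -> (q, m) \in D -> (m \in B) && (rk m < rk q)%N.
Local Notation S := (edge_cols D B z).

Lemma delta_s_in_span : in_span R D S (delta R (s_var n)).
Proof.
apply: in_span_eq _ (in_span_col R D (mem_edge_cols_sink D B z)) => th _.
by rewrite jac_sink //; case: simpleD.
Qed.

(* Up to the coordinate vector of s, the column K_pq is -s times that of lambda_pq plus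
   multiples of those of lambda_pb and lambda_qb for children b of q, which lie lower in B. *)
Lemma delta_lam_in_span p q :
  (p, q) \in D -> q \in B -> in_span R D S (delta R (lam_var (p, q))).
Proof.
move=> pqD qB; have [k] := ubnP (rk q); elim: k p q pqD qB => // k IH p q pqD qB lt_q.
have child_span b p' :
    (q, b) \in D -> (p', b) \in D -> in_span R D S (delta R (lam_var (p', b))).
  move=> qbD p'bD; have /andP[bB lt_b] := B_closed qB qbD.
  by apply: IH p'bD bB _; apply: leq_trans lt_b lt_q.
pose v th := jac R D th (p, q) + s_frac R n * delta R (lam_var (p, q)) th.
have span_v : in_span R D S v.
  apply: (in_span_support delta_s_in_span) => -[a b] abD nz.
  have [[ea eb]|ne] := eqVneq (a, b) (p, q).
    by move: nz; rewrite /v /delta ea eb eqxx jac_lam_edge // mulr1 addNr eqxx.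
  rewrite /v /delta (inj_eq (@lam_var_inj n)) (negbTE ne) mulr0 addr0 in nz.
  have /andP[_ /orP[] /andP[/eqP ea]] := jac_lam_neq0 nz; subst a.
    case/orP => [/eqP qb|qbD]; last exact: (child_span _ _ qbD abD).
    by rewrite qb eqxx in ne.
  by move=> _; exact: (child_span _ _ abD abD).
have span_pq := in_span_col R D (mem_edge_cols z pqD qB).
apply: in_span_eq _ (in_spanD (in_spanZ (s_frac R n)^-1 span_v)
                               (in_spanZ (- (s_frac R n)^-1) span_pq)).
move=> th _; rewrite /v jac_upair mulrDr mulNr addrAC subrr add0r mulrA mulVf ?mul1r //.
exact: s_frac_neq0.
Qed.

Lemma edge_cols_dependent i w :
  i \notin B -> w \notin B -> i != w -> (forall k, (w, k) \in D -> k \in B) ->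
  (i, w) \notin D -> ~ jac_indep R D (upair i w |: S).
Proof.
move=> iB wB iw w_ch iwD; apply: in_span_dependent (upair_notin_edge_cols D z iB wB iw) _.
apply: in_span_eq (fun th _ => esym (jac_upair R D th i w)) _.
apply: (in_span_support delta_s_in_span) => -[a b] abD /jac_lam_neq0.
rewrite abD /= => /orP[] /andP[/eqP ea]; subst a.
  2: by move=> _; apply: delta_lam_in_span abD (w_ch b abD).
case/orP => [/eqP wb|wbD]; last exact: delta_lam_in_span abD (w_ch b wbD).
by rewrite wb abD in iwD.
Qed.

Section Independence.
Variables (i w : 'I_n).
Hypotheses (iB : i \notin B) (wB : w \notin B) (iwD : (i, w) \in D).
Local Notation S' := (upair i w |: S).

Section Coefficients.
Variable x : 'I_n * 'I_n -> {fraction {mpoly R[nvars n]}}.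
Hypothesis rel : forall th, is_param D th -> \sum_(c in S') x c * jac R D th c = 0.

Lemma coef_upair_eq0 : x (upair i w) = 0.
Proof.
apply: (pivot_coef_eq0 (setU11 _ _) _ _ (rel (is_param_lam iwD))).
  by rewrite jac_upair jac_lam_edge // oppr_eq0 s_frac_neq0.
move=> c /setU1P[-> /eqP //|/edge_cols_cases[->|[p [q [pqD qB ->]]]]] _.
  rewrite (_ : jac R D _ _ = 0) ?mulr0 //; apply/eqP; apply: contraT => /jac_lam_neq0.
  by rewrite iwD orbb /= => /andP[/eqP zi _]; move: (sink_z w); rewrite zi iwD.
rewrite jac_upair (_ : jac R D _ _ = 0) ?mulr0 //; apply/eqP; apply: contraT => /jac_lam_neq0.
rewrite iwD /= => /orP[] /andP[/eqP qi]; last by move: iB; rewrite -qi qB.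
case/orP => [/eqP qw|/(B_closed qB)/andP[w_in_B _]]; last by move: wB; rewrite w_in_B.
by move: wB; rewrite -qw qB.
Qed.

(* Row lambda_pq meets the other columns of S' only in K_iw and in columns of edges whose head
   is a parent of q or is p itself; those heads lie higher in B, so we descend through B. *)
Lemma coef_edge_eq0 p q : (p, q) \in D -> q \in B -> x (upair p q) = 0.
Proof.
suff edge : forall e, e \in D -> e.2 \in B -> x (upair e.1 e.2) = 0 by apply: (edge (p, q)).
elim/(@fin_down_ind _ (fun e : 'I_n * 'I_n => rk e.2)) => -[{}p {}q] IH /= pqD qB.
have [nl asym] := simpleD.
apply: (pivot_coef_eq0 (setU1r _ (mem_edge_cols z pqD qB)) _ _ (rel (is_param_lam pqD))).
  by rewrite jac_upair jac_lam_edge // oppr_eq0 s_frac_neq0.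
move=> c /setU1P[->|/edge_cols_cases[->|[p' [q' [pqD' qB' ->]]]]] ne.
- by rewrite coef_upair_eq0 mul0r.
- rewrite (_ : jac R D _ _ = 0) ?mulr0 //; apply/eqP; apply: contraT => /jac_lam_neq0.
  rewrite pqD orbb /= => /andP[/eqP zp /orP[/eqP zq|zqD]].
    by move: (nl z); rewrite {1}zp zq pqD.
  by move: (sink_z q); rewrite zqD.
have [lt|ge] := ltnP (rk q) (rk q'); first by rewrite (IH (p', q')) ?mul0r.
rewrite jac_upair (_ : jac R D _ _ = 0) ?mulr0 //; apply/eqP; apply: contraT => /jac_lam_neq0.
rewrite pqD /= => /orP[] /andP[/eqP e1 /orP[/eqP e2|e2D]].
- by move: ne; rewrite e1 e2 eqxx.
- by have /andP[_] := B_closed qB' e2D; rewrite ltnNge ge.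
- by move: (asym _ _ pqD); rewrite -e1 -e2 pqD'.
- by rewrite -e1 in pqD; have /andP[_] := B_closed qB' pqD; rewrite ltnNge ge.
Qed.

Lemma coef_sink_eq0 : x (z, z) = 0.
Proof.
apply: (pivot_coef_eq0 (setU1r _ (mem_edge_cols_sink D B z)) _ _ (rel (is_param_s D))).
  by rewrite jac_sink ?eqxx ?oner_neq0 //; case: simpleD.
move=> c /setU1P[->|/edge_cols_cases[->|[p [q [pqD qB ->]]]]] ne.
- by rewrite coef_upair_eq0 mul0r.
- by rewrite eqxx in ne.
- by rewrite coef_edge_eq0 ?mul0r.
Qed.

End Coefficients.

Lemma edge_cols_independent : jac_indep R D S'.
Proof.
split; first by rewrite subUset sub1set upair_ground edge_cols_ground.
move=> x rel c /setU1P[->|/edge_cols_cases[->|[p [q [pqD qB ->]]]]].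
- exact: coef_upair_eq0 rel.
- exact: coef_sink_eq0 rel.
- exact: (coef_edge_eq0 rel pqD qB).
Qed.

End Independence.

End EdgeColumns.

Section SameOutDegrees.
Variables (n : nat) (D1 D2 : {set 'I_n * 'I_n}).
Hypotheses (simple1 : simple_digraph D1) (simple2 : simple_digraph D2).
Hypothesis ch_card : forall v, #|ch D1 v| = #|ch D2 v|.
Hypothesis acyclic1 : acyclic D1.

Definition parents_differ (w : 'I_n) : bool :=
  [exists p, ((p, w) \in D1) != ((p, w) \in D2)].

Section MinimalNode.
Variable w : 'I_n.
Hypothesis minimal_w : forall b, b \in desc D1 w -> ~~ parents_differ b.
Local Notation B := (desc D1 w).
Local Notation rk v := #|desc D1 v|.

Lemma parents_agree p q : q \in B -> ((p, q) \in D1) = ((p, q) \in D2).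
Proof. by move/minimal_w; rewrite negb_exists => /forallP/(_ p)/negbNE/eqP. Qed.

Lemma children_agree q m : (q == w) || (q \in B) -> ((q, m) \in D1) = ((q, m) \in D2).
Proof.
move=> qwB; suff /setP/(_ m) : ch D1 q = ch D2 q by rewrite !inE.
apply/eqP; rewrite eqEcard ch_card leqnn andbT; apply/subsetP => k; rewrite !inE => qk.
rewrite -parents_agree //; case/orP: qwB => [/eqP <-|qB]; first exact: mem_desc_child.
exact: desc_trans qB (mem_desc_child qk).
Qed.

Lemma desc_closed1 q m : q \in B -> (q, m) \in D1 -> (m \in B) && (rk m < rk q)%N.
Proof.
move=> qB qm; have m_desc := mem_desc_child qm.
by rewrite (desc_trans qB m_desc) card_desc_lt.
Qed.

Lemma desc_closed2 q m : q \in B -> (q, m) \in D2 -> (m \in B) && (rk m < rk q)%N.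
Proof. by move=> qB; rewrite -children_agree ?qB ?orbT //; apply: desc_closed1. Qed.

Lemma children2_desc k : (w, k) \in D2 -> k \in B.
Proof. by rewrite -children_agree ?eqxx //; apply: mem_desc_child. Qed.

Lemma edge_cols_agree z : edge_cols D1 B z = edge_cols D2 B z.
Proof.
suff E : [set e in D1 | e.2 \in B] = [set e in D2 | e.2 \in B] by rewrite /edge_cols E.
apply/setP => -[p q]; rewrite [LHS]in_set [RHS]in_set /=.
by case: (boolP (q \in B)) => qB; rewrite ?andbF ?andbT ?parents_agree.
Qed.

End MinimalNode.

Lemma exists_parents_differ : D1 != D2 -> exists w, parents_differ w.
Proof.
move=> neqD; have : ~~ [forall e, (e \in D1) == (e \in D2)].
  by apply: contra neqD => /forallP E; apply/eqP/setP => e; apply/eqP/E.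
by rewrite negb_forall => /existsP[[p w] pw]; exists w; apply/existsP; exists p.
Qed.

Lemma sink_same_out_degree z : (forall k, (z, k) \notin D1) -> forall k, (z, k) \notin D2.
Proof.
move=> sink1 k; have : ch D2 z = set0.
  apply/eqP; rewrite -cards_eq0 -ch_card cards_eq0; apply/eqP/setP => k'.
  by rewrite !inE (negbTE (sink1 k')).
by move/setP/(_ k); rewrite !inE => ->.
Qed.

Lemma jacobian_matroid_neq_of_acyclic (R : realType) :
  D1 != D2 -> jacobian_matroid R D1 <> jacobian_matroid R D2.
Proof.
move=> /exists_parents_differ[w0 w0_diff] sameM.
have [w /existsP[i iw_diff] minimal_w] := acyclic_minimal acyclic1 w0_diff.
have [z sink1] := acyclic_sink acyclic1 w.
have sink2 := sink_same_out_degree sink1.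
have wB := desc_irr acyclic1 w.
have iB : i \notin desc D1 w.
  by apply: contraNN iw_diff => iB; rewrite (children_agree minimal_w) ?iB ?orbT.
have iw : i != w.
  apply: contraNneq iw_diff => ->.
  by rewrite (negbTE (proj1 simple1 w)) (negbTE (proj1 simple2 w)).
have closed1 := @desc_closed1 w.
have closed2 := desc_closed2 minimal_w.
move: iw_diff sameM; rewrite /jacobian_matroid.
case iwD1: ((i, w) \in D1); case iwD2: ((i, w) \in D2) => // _ sameM.
  have := edge_cols_independent R simple1 sink1 closed1 iB wB iwD1.
  rewrite sameM edge_cols_agree //.
  exact: (edge_cols_dependent simple2 sink2 closed2 iB wB iw
            (children2_desc minimal_w) (negbT iwD2)).
have := edge_cols_independent R simple2 sink2 closed2 iB wB iwD2.
rewrite -sameM -edge_cols_agree //.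
exact: (edge_cols_dependent simple1 sink1 closed1 iB wB iw
          (@mem_desc_child _ _ w) (negbT iwD1)).
Qed.

End SameOutDegrees.

Theorem corollary4p14 (R : realType) (n : nat) (D1 D2 : {set 'I_n * 'I_n}) :
  simple_digraph D1 -> simple_digraph D2 ->
  D1 != D2 ->
  (forall v : 'I_n, #|ch D1 v| = #|ch D2 v|) ->
  acyclic D1 \/ acyclic D2 ->
  jacobian_matroid R D1 <> jacobian_matroid R D2.
Proof.
move=> simple1 simple2 neqD ch_card [acyclic1|acyclic2].
  exact: jacobian_matroid_neq_of_acyclic.
have ch_card' v : #|ch D2 v| = #|ch D1 v| by rewrite ch_card.
move/esym; apply: (jacobian_matroid_neq_of_acyclic simple2 simple1 ch_card' acyclic2).
by rewrite eq_sym.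
Qed.
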